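(* Let $\mathcal I$ be an ideal on $\mathbb N$ which is analytic or coanalytic. Then for any series $\sum_n x_n$ in a Banach space $X$, the set $$A(\mathcal I):=\left\{t \in \{0,1\}^{\mathbb N} \colon \sum_n t(n)x_n \text{ is } \mathcal I\text{-convergent}\right\}$$ is $\lambda$-measurable and $\lambda(A(\mathcal I))$ is either $0$ or $1$. Moreover, if $\sum_n x_n$ is $\mathcal I$-divergent, then $\lambda(A(\mathcal I))=0$.
   Context: $\mathbb N=\{1,2,\dots\}$. An ideal on $\mathbb N$ is a family $\mathcal I\subset\mathcal P(\mathbb N)$ closed under finite unions and subsets, with $\mathbb N\notin\mathcal I$ and containing all finite subsets of $\mathbb N$; via characteristic functions it is regarded as a subset of the Cantor space $\{0,1\}^{\mathbb N}$, and ''analytic''/''coanalytic'' refer to this subset. A sequence $(y_n)$ in a normed space is $\mathcal I$-convergent to $y$ if $\{n:\|y_n-y\|>\varepsilon\}\in\mathcal I$ for every $\varepsilon>0$; a series is $\mathcal I$-convergent if its sequence of partial sums is $\mathcal I$-convergent to some element, and $\mathcal I$-divergent otherwise. $\lambda$ is the product probability measure on $\{0,1\}^{\mathbb N}$ generated by the measure giving mass $1/2$ to each of $0$ and $1$ (the Haar measure on the Cantor group). Banach spaces are over $\mathbb R$. *)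

From HB Require Import structures.
From mathcomp Require Import all_boot all_order all_algebra.
From mathcomp Require Import all_classical all_reals all_analysis.
Set Implicit Arguments. Unset Strict Implicit. Unset Printing Implicit Defensive.
Import Order.TTheory GRing.Theory Num.Theory.
Import numFieldNormedType.Exports.
Local Open Scope classical_set_scope.
Local Open Scope ring_scope.

(* N = {1,2,...} is relabelled as nat = {0,1,2,...} (shift by one). *)

Definition is_ideal (I : set (set nat)) : Prop :=
  [/\ (forall A B, I A -> I B -> I (A `|` B)),
      (forall A B, B `<=` A -> I A -> I B),
      ~ I setT &
      (forall A, finite_set A -> I A)].

Definition ideal_code (I : set (set nat)) : set cantor_space :=
  [set t | I [set n | t n]].

Definition baire_space : Type := prod_topology (fun _ : nat => nat).

Definition analytic (T : topologicalType) (S : set T) : Prop :=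
  S = set0 \/ exists f : baire_space -> T, continuous f /\ S = f @` setT.

Definition coanalytic (T : topologicalType) (S : set T) : Prop :=
  analytic (~` S).

Definition I_converges_to (R : realType) (X : normedModType R)
  (I : set (set nat)) (y : nat -> X) (l : X) : Prop :=
  forall e : R, 0 < e -> I [set n | e < `|y n - l|].

Definition partial_sums (R : realType) (X : normedModType R) (x : nat -> X)
  : nat -> X := fun n => \sum_(i < n.+1) x i.

Definition I_convergent_series (R : realType) (X : normedModType R)
  (I : set (set nat)) (x : nat -> X) : Prop :=
  exists l : X, I_converges_to I (partial_sums x) l.

(** The Haar (product, fair coin) measure lambda on {0,1}^nat, built by the
    Caratheodory construction from the premeasure giving mass 2^-n to each
    cylinder determined by a word of length n.  lambda-measurable sets are the
    Caratheodory-measurable sets for the induced outer measure (these are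
    exactly the sets measurable for the completion of lambda). *)
Definition cylinder (s : seq bool) : set cantor_space :=
  [set t | forall i, (i < size s)%N -> t i = nth false s i].

Definition lambda_outer (R : realType) (A : set cantor_space) : \bar R :=
  ereal_inf [set r : \bar R | exists s : nat -> seq bool,
    A `<=` \bigcup_i cylinder (s i) /\
    r = (\sum_(0 <= i <oo) (((2 : R)^-1) ^+ size (s i))%:E)%E].

Definition lambda_measurable (R : realType) (A : set cantor_space) : Prop :=
  caratheodory_measurable (@lambda_outer R) A.

From HB Require Import structures.
From mathcomp Require Import all_boot all_order all_algebra.
From mathcomp Require Import all_classical all_reals all_analysis.
From mathcomp Require Import ring lra.
Import Order.TTheory GRing.Theory Num.Theory.
Import numFieldNormedType.Exports.
Local Open Scope classical_set_scope.
Local Open Scope ring_scope.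
Set Implicit Arguments. Unset Strict Implicit. Unset Printing Implicit Defensive.

(* The fair-coin measure is built as the Caratheodory extension of the outer
   measure [lambda_outer]; cylinders are measurable, and the whole space has
   measure 1 by compactness of the Cantor space.

   Changing one coordinate of [t] shifts the partial sums of the series
   [sum_n t(n) x_n] by a constant from some index on, so the set [A] of those
   [t] for which this series is I-convergent is invariant under these flips.
   For such a set, the relative measure in every cylinder equals its total
   measure [a]; covering [A] by cylinders of total weight close to [a] gives
   [a <= a^2], whence [a] is 0 or 1.

   For measurability, an I-Cauchy criterion writes [A] as a countable Boolean
   combination of preimages of the code of [I] under maps each of whose output
   coordinates depends on finitely many input coordinates.  The preimage of an
   analytic set [range f] under such a map is measurable: bounding the
   Baire-space witnesses coordinate by coordinate yields measurable inner
   approximations of almost full measure, which are contained in the preimage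
   by Konig's lemma and the continuity of [f].

   Finally, if [A] has measure 1 it meets its image under [t |-> 1 - t], and
   adding the two series shows that [sum_n x_n] itself is I-convergent. *)

(** * The fair-coin outer measure *)

Definition cylinder_weight (R : realType) (s : seq bool) : R :=
  ((2 : R)^-1) ^+ size s.

Section LambdaOuter.
Variable R : realType.
Local Open Scope ereal_scope.
Local Notation lam := (@lambda_outer R).
Local Notation w := (@cylinder_weight R).

Lemma halfpow_gt0 k : (0 < ((2 : R)^-1) ^+ k)%R.
Proof. by rewrite exprn_gt0 // invr_gt0. Qed.

Lemma cylinder_weight_ge0 s : (0 <= w s)%R.
Proof. exact/ltW/halfpow_gt0. Qed.

Lemma halfpow_le k j : (k <= j)%N -> (((2 : R)^-1) ^+ j <= ((2 : R)^-1) ^+ k)%R.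
Proof. by move=> kj; apply: ler_wiXn2l kj; rewrite ?invr_ge0 ?invf_le1 ?ler1n. Qed.

Lemma halfpow_lt (e : R) : (0 < e)%R -> exists k, (((2 : R)^-1) ^+ k < e)%R.
Proof.
move=> e0; case: (near_infty_natSinv_expn_lt (PosNum e0)) => k _ hk.
by exists k; have := hk k (leqnn k); rewrite /= div1r exprVn.
Qed.

Lemma lee_add_halfpow (x y : \bar R) :
  (forall k, x <= y + (((2 : R)^-1) ^+ k)%:E) -> x <= y.
Proof.
move=> h; apply/lee_addgt0Pr => e e0; have [k hk] := halfpow_lt e0.
by apply: le_trans (h k) _; rewrite leeD2l // lee_fin ltW.
Qed.

Lemma lambda_outer_le_cover A (s : nat -> seq bool) :
  A `<=` \bigcup_i cylinder (s i) -> lam A <= \sum_(0 <= i <oo) (w (s i))%:E.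
Proof. by move=> As; apply: ereal_inf_lbound; exists s. Qed.

Lemma lambda_outer_ge0 A : 0 <= lam A.
Proof.
apply: le_ereal_inf_tmp => _ [s [_ ->]]; apply: nneseries_ge0 => n _ _.
exact: cylinder_weight_ge0.
Qed.

Lemma weight_nseq_false_series k :
  \sum_(0 <= i <oo) (w (nseq (i + k).+1 false))%:E <= (((2 : R)^-1) ^+ k)%:E.
Proof.
have := @epsilon_trick R (fun=> 0) _ xpredT (fun=> lexx 0) (ltW (halfpow_gt0 k)).
move=> H; apply: le_trans (le_trans H _); last by rewrite eseries0 // add0e.
apply: lee_nneseries => [*|i _]; first exact/cylinder_weight_ge0.
rewrite add0e /cylinder_weight size_nseq lee_fin natrX -exprVn -exprD.
by rewrite addnC addnS.
Qed.

(* Pad the one-word cover [v] with words of total weight at most [2^-k]. *)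
Lemma lambda_outer_le_cylinder A v :
  A `<=` cylinder v -> lam A <= (w v)%:E.
Proof.
move=> Av; apply: lee_add_halfpow => k.
pose s i := if i is i'.+1 then nseq (i' + k).+1 false else v.
apply: le_trans (lambda_outer_le_cover (s := s) _) _.
  by move=> t /Av ct; exists 0%N.
rewrite nneseries_recl //; last by move=> *; exact/cylinder_weight_ge0.
rewrite leeD2l // -nneseries_addn; last by move=> *; exact/cylinder_weight_ge0.
apply: le_trans (weight_nseq_false_series k); apply: lee_nneseries.
  by move=> *; exact/cylinder_weight_ge0.
by move=> i _; rewrite addn1.
Qed.

Lemma cylinder_nil : cylinder [::] = setT.
Proof. by apply/seteqP; split => // t _ i; rewrite ltn0. Qed.

Lemma lambda_outer_le1 A : lam A <= 1.
Proof.
by apply: le_trans (lambda_outer_le_cylinder (v := [::]) _) _; rewrite ?cylinder_nil.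
Qed.

Lemma lambda_outer_fin_num A : lam A \is a fin_num.
Proof.
rewrite ge0_fin_numE ?lambda_outer_ge0 //.
exact: le_lt_trans (lambda_outer_le1 A) (ltry 1).
Qed.

Lemma lambda_outer0 : lam set0 = 0.
Proof.
apply/eqP; rewrite eq_le lambda_outer_ge0 andbT; apply: lee_add_halfpow => k.
apply: le_trans (lambda_outer_le_cylinder (v := nseq k false) (sub0set _)) _.
by rewrite add0e /cylinder_weight size_nseq.
Qed.

Lemma le_lambda_outer : {homo lam : A B / A `<=` B >-> A <= B}.
Proof.
move=> A B AB; apply: le_ereal_inf_tmp => _ [s [Bs ->]].
by apply: ereal_inf_lbound; exists s; split => //; exact: subset_trans Bs.
Qed.

Lemma lambda_outer_adherent A (e : R) : (0 < e)%R -> exists s : nat -> seq bool,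
  A `<=` \bigcup_i cylinder (s i) /\
  \sum_(0 <= i <oo) (w (s i))%:E <= lam A + e%:E.
Proof.
move=> e0; have /(lb_ereal_inf_adherent e0) := lambda_outer_fin_num A.
by move=> [_ [s [As ->]] H]; exists s; split => //; exact: ltW.
Qed.

(* A double sequence of covers is reindexed along a bijection [nat -> nat * nat]. *)
Lemma lambda_outer_le_double_cover A (G : nat -> nat -> seq bool) :
  A `<=` \bigcup_i \bigcup_j cylinder (G i j) ->
  lam A <= \sum_(0 <= i <oo) \sum_(0 <= j <oo) (w (G i j))%:E.
Proof.
move=> AG; have /card_esym/ppcard_eqP[f] := card_nat2.
have wG_ge0 (k : nat * nat) : 0 <= (w (uncurry G k))%:E.
  by rewrite lee_fin cylinder_weight_ge0.
apply: le_trans (lambda_outer_le_cover (s := uncurry G \o f) _) _.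
  move=> t /AG [i _ [j _ Gt]]; exists (f^-1%FUN (i, j)) => //=.
  by rewrite invK ?inE.
rewrite nneseries_esumT; last by move=> n; exact: wG_ge0.
rewrite -(reindex_esum setT setT f (fun k => (w (uncurry G k))%:E)); last exact: bij.
rewrite nneseries_esumT; last by move=> i; apply: nneseries_ge0 => j _ _; exact: (wG_ge0 (i, j)).
rewrite (eq_esum (b := fun i => \esum_(j in setT) (w (G i j))%:E)); last first.
  by move=> i _; rewrite nneseries_esumT // => j; exact: (wG_ge0 (i, j)).
rewrite esum_esum; last by move=> i j _ _; exact: (wG_ge0 (i, j)).
rewrite [X in _ <= X](_ : _ = \esum_(k in setT) (w (uncurry G k))%:E) //.
rewrite [in LHS](_ : _ `*`` _ = setT); last by apply/seteqP; split.
by apply: eq_esum => -[i j].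
Qed.

Lemma lambda_outer_sigma_subadditive : sigma_subadditive lam.
Proof.
move=> A; apply/lee_addgt0Pr => e e0.
rewrite (le_trans _ (epsilon_trick _ _ (ltW e0)))//; last by move=> n; exact: lambda_outer_ge0.
pose P n (s : nat -> seq bool) := A n `<=` \bigcup_i cylinder (s i) /\
  \sum_(0 <= k <oo) (w (s k))%:E <= lam (A n) + (e / (2 ^ n.+1)%:R)%:E.
have [G PG] : {G : (nat -> seq bool)^nat & forall n, P n (G n)}.
  apply: (@choice _ _ P) => n; apply: lambda_outer_adherent.
  by apply: divr_gt0 => //; rewrite ltr0n expn_gt0.
apply: le_trans (lambda_outer_le_double_cover (G := G) _) _.
  by move=> t [n _ /(PG n).1 [j _ Gt]]; exists n => //; exists j.
apply: lee_nneseries => [n _ _|n _]; last exact: (PG n).2.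
by apply: nneseries_ge0 => *; exact/cylinder_weight_ge0.
Qed.

HB.instance Definition _ := isOuterMeasure.Build R cantor_space lam
  lambda_outer0 lambda_outer_ge0 le_lambda_outer lambda_outer_sigma_subadditive.

End LambdaOuter.

Section Cylinders.
Variable R : realType.
Local Open Scope ereal_scope.
Local Notation lam := (@lambda_outer R).
Local Notation w := (@cylinder_weight R).

Lemma cylinder_rcons u b :
  cylinder (rcons u b) = cylinder u `&` [set t | t (size u) = b].
Proof.
apply/seteqP; split => t.
  move=> ut; split; last first.
    by have := ut (size u); rewrite size_rcons ltnSn nth_rcons ltnn eqxx; apply.
  move=> i iu; have := ut i; rewrite size_rcons ltnS nth_rcons iu; apply; exact: ltnW.
move=> [ut tu] i; rewrite size_rcons ltnS nth_rcons leq_eqVlt.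
case/orP => [/eqP ->|iu]; first by rewrite ltnn eqxx.
by rewrite iu; apply: ut.
Qed.

Lemma cylinder_take_sub u s : take (size s) u = s -> cylinder u `<=` cylinder s.
Proof.
move=> us t ut i iS; have su : (size s <= size u)%N.
  by rewrite -us size_take; case: ltnP => //; exact: ltnW.
rewrite -us nth_take //; apply: ut; exact: leq_trans iS su.
Qed.

Lemma take_cylinder_meet u s t : cylinder u t -> cylinder s t ->
  (size s <= size u)%N -> take (size s) u = s.
Proof.
move=> ut st su.
have e : size (take (size s) u) = size s by rewrite size_takel.
apply: (@eq_from_nth _ false) => // i; rewrite e => iS.
by rewrite nth_take // -(ut i (leq_trans iS su)) (st i iS).
Qed.

Lemma cylinder_weight_split u b :
  w u = (w (rcons u b) + w (rcons u (~~ b)))%R.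
Proof. by rewrite /cylinder_weight !size_rcons exprS; field. Qed.

Lemma lambda_outer_cylinder_split_cat u v :
  lam (cylinder u `&` cylinder (u ++ v)) + lam (cylinder u `&` ~` cylinder (u ++ v))
  <= (w u)%:E.
Proof.
elim: v u => [|b v IH] u.
  rewrite cats0 setIid setICr outer_measure0 adde0.
  exact: lambda_outer_le_cylinder.
have cat_sub u' v' : cylinder (u' ++ v') `<=` cylinder u'.
  by apply: cylinder_take_sub; rewrite take_size_cat.
rewrite (setIidr (cat_sub _ _)) -cat_rcons (cylinder_weight_split u b) EFinD.
have := IH (rcons u b); rewrite (setIidr (cat_sub _ _)) => IHb.
have sub : cylinder u `&` ~` cylinder (rcons u b ++ v) `<=`
    cylinder (rcons u (~~ b)) `|` (cylinder (rcons u b) `&` ~` cylinder (rcons u b ++ v)).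
  move=> t [ut nt]; rewrite !cylinder_rcons.
  case: (boolP (t (size u) == b)) => /eqP tb; first by right.
  by left; split => //=; move/eqP: tb; case: (t (size u)); case: (b).
apply: le_trans (leeD2l _ (le_trans (le_outer_measure _ _ _ sub)
  (outer_measureU2 lam _ _))) _.
rewrite addeCA addeC; apply: leeD => //; exact: lambda_outer_le_cylinder.
Qed.

Lemma lambda_outer_cylinder_split u s :
  lam (cylinder u `&` cylinder s) + lam (cylinder u `&` ~` cylinder s) <= (w u)%:E.
Proof.
case: (leqP (size s) (size u)) => [su|us].
  case: (boolP (take (size s) u == s)) => [/eqP h|h].
    have -> : cylinder u `&` ~` cylinder s = set0.
      by apply/seteqP; split => // t [/(cylinder_take_sub h)].
    by rewrite outer_measure0 adde0; exact: lambda_outer_le_cylinder.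
  have -> : cylinder u `&` cylinder s = set0.
    apply/seteqP; split => // t [ut st]; move/negP: h; apply.
    by apply/eqP; exact: take_cylinder_meet ut st su.
  by rewrite outer_measure0 add0e; exact: lambda_outer_le_cylinder.
case: (boolP (take (size u) s == u)) => [/eqP h|h].
  rewrite -(cat_take_drop (size u) s) h.
  exact: lambda_outer_cylinder_split_cat.
have -> : cylinder u `&` cylinder s = set0.
  apply/seteqP; split => // t [ut st]; move/negP: h; apply.
  by apply/eqP; apply: take_cylinder_meet st ut _; exact: ltnW.
by rewrite outer_measure0 add0e; exact: lambda_outer_le_cylinder.
Qed.

(* Split an almost optimal cylinder cover of the test set along [cylinder s]. *)
Lemma cylinder_measurable s : lambda_measurable R (cylinder s).
Proof.
apply: le_caratheodory_measurable => B.
apply/lee_addgt0Pr => e e0.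
have [c [Bc Hc]] := lambda_outer_adherent B e0.
apply: le_trans Hc.
set C := cylinder s.
have split_cover (D : set cantor_space) :
    lam (B `&` D) <= \sum_(0 <= i <oo) lam (cylinder (c i) `&` D).
  apply: le_trans (outer_measure_sigma_subadditive lam (fun i => cylinder (c i) `&` D)).
  by apply: le_outer_measure => t [/Bc [i _ ct] Dt]; exists i.
apply: le_trans (leeD (split_cover C) (split_cover (~` C))) _.
rewrite -nneseriesD => [|*|*]; try exact: outer_measure_ge0.
apply: lee_nneseries => [*|i _]; last exact: lambda_outer_cylinder_split.
by apply: adde_ge0; exact: outer_measure_ge0.
Qed.

End Cylinders.

Section TotalMass.
Variable R : realType.
Local Open Scope ereal_scope.
Local Notation lam := (@lambda_outer R).
Local Notation w := (@cylinder_weight R).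

(* Induction on the maximal word length, splitting the cover by first letter. *)
Lemma finite_cylinder_cover_weight_ge1 n (L : seq (seq bool)) :
  all (fun s => size s <= n)%N L ->
  (forall t : cantor_space, exists2 s, s \in L & cylinder s t) ->
  (1 <= \sum_(s <- L) w s)%R.
Proof.
elim: n L => [|n IH] L Ln cov; (case: (boolP ([::] \in L)) => nil;
  first by rewrite (big_rem _ nil) /= /cylinder_weight expr0 lerDl;
           apply: sumr_ge0 => *; exact: cylinder_weight_ge0).
  have [s sL _] := cov (fun=> false).
  move/allP: Ln => /(_ _ sL); rewrite leqn0 size_eq0 => /eqP s0.
  by move: nil; rewrite -s0 sL.
pose L_ b := [seq behead s | s <- L & head false s == b].
have cov_ b (t : cantor_space) : exists2 s, s \in L_ b & cylinder s t.
  pose t' : cantor_space := fun i => if i is i'.+1 then t i' else b.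
  have [[|x s'] sL cs] := cov t'; first by move: nil; rewrite sL.
  have xb : x = b by have := cs 0%N erefl.
  exists s'; last by move=> i is'; have := cs i.+1 is'.
  by apply/mapP; exists (x :: s'); rewrite // mem_filter /= sL xb eqxx.
have Ln_ b : all (fun s => size s <= n)%N (L_ b).
  apply/allP => s /mapP [s0 + ->]; rewrite mem_filter => /andP [_ s0L].
  by move/allP: Ln => /(_ _ s0L); rewrite size_behead; case: (size s0).
have sum_ b : (\sum_(s <- L | head false s == b) w s = 2^-1 * \sum_(s <- L_ b) w s)%R.
  rewrite big_map big_filter mulr_sumr big_seq_cond [RHS]big_seq_cond.
  apply: eq_bigr => -[|x s] /andP [sL _]; first by move: nil; rewrite sL.
  by rewrite /cylinder_weight /= exprS.
rewrite (bigID (fun s => head false s == true)) /=.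
have -> : (\sum_(s <- L | head false s != true) w s =
            \sum_(s <- L | head false s == false) w s)%R.
  by apply: eq_bigl => s; case: (head false s).
have := IH _ (Ln_ true) (cov_ true); have := IH _ (Ln_ false) (cov_ false).
rewrite !sum_; lra.
Qed.

Lemma open_cylinder s : open (cylinder s).
Proof.
elim/last_ind: s => [|u b IH]; first by rewrite cylinder_nil; exact: openT.
rewrite cylinder_rcons; apply: openI => //.
have -> : [set t : cantor_space | t (size u) = b] = proj (size u) @^-1` [set b] by [].
apply: open_comp; last exact: discrete_open.
by move=> t _; exact: proj_continuous.
Qed.

Lemma cylinder_cover_finite (s : nat -> seq bool) :
  [set: cantor_space] `<=` \bigcup_i cylinder (s i) ->
  exists N, forall t : cantor_space, exists2 i, (i < N)%N & cylinder (s i) t.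
Proof.
move=> cov; have := cantor_space_compact.
rewrite compact_cover => /(_ nat setT (fun i => cylinder (s i))).
case => [i _|t _|D _ HD]; first exact: open_cylinder.
  by have [i _ ?] := cov t I; exists i.
exists (\max_(i <- finmap.enum_fset D) i).+1 => t.
have [i iD ?] := HD t I; exists i => //.
by rewrite ltnS; exact: (@leq_bigmax_seq _ _ xpredT id i iD).
Qed.

Lemma lambda_outer_setT : lam setT = 1.
Proof.
apply/eqP; rewrite eq_le lambda_outer_le1 /=.
apply: le_ereal_inf_tmp => _ [s [cov ->]].
have [N HN] := cylinder_cover_finite cov.
apply: le_trans (nneseries_lim_ge N _); last by move=> *; exact/cylinder_weight_ge0.
rewrite sumEFin lee_fin.
change (1 <= \sum_(i <- index_iota 0 N) w (s i))%R; rewrite -(big_map s xpredT w).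
set L := map s _.
apply: (@finite_cylinder_cover_weight_ge1 (\max_(x <- L) size x)).
  by apply/allP => x xL; exact: (@leq_bigmax_seq _ L xpredT size x xL).
move=> t; have [i iN ci] := HN t; exists (s i) => //.
by apply: map_f; rewrite mem_index_iota.
Qed.

End TotalMass.

(** * Regularity of the Caratheodory extension *)

Definition lambda_real (R : realType) (A : set cantor_space) : R :=
  fine (lambda_outer R A).

Section LambdaMeasurable.
Variable R : realType.
Local Open Scope ereal_scope.
Local Notation lam := (@lambda_outer R).
Local Notation lr := (@lambda_real R).
Local Notation M := (lambda_measurable R).
Local Notation U := (caratheodory_type (@lambda_outer R)).
Let mu : {outer_measure set cantor_space -> \bar R} := lam.

Lemma lambda_outerE A : lam A = (lr A)%:E.
Proof. by rewrite /lambda_real fineK // lambda_outer_fin_num. Qed.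

Lemma lambda_real_ge0 A : (0 <= lr A)%R.
Proof. by rewrite -lee_fin -lambda_outerE lambda_outer_ge0. Qed.

Lemma lambda_real_le1 A : (lr A <= 1)%R.
Proof. by rewrite -lee_fin -lambda_outerE lambda_outer_le1. Qed.

Lemma le_lambda_real A B : A `<=` B -> (lr A <= lr B)%R.
Proof. by move=> AB; rewrite -lee_fin -!lambda_outerE le_lambda_outer. Qed.

Lemma lambda_real_setT : lr setT = 1%R.
Proof. by apply: EFin_inj; rewrite -lambda_outerE lambda_outer_setT. Qed.

Lemma lambda_real_split A B : M A -> lr B = (lr (B `&` A) + lr (B `&` ~` A))%R.
Proof. by move=> MA; apply: EFin_inj; rewrite EFinD -!lambda_outerE; exact: MA. Qed.

Lemma lambda_measurable_null N : lr N = 0%R -> M N.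
Proof.
move=> N0; apply: le_caratheodory_measurable => B.
have : lam (B `&` N) <= lam N by apply: le_lambda_outer => t [].
rewrite [lam N]lambda_outerE N0 => BN0.
by rewrite -[leRHS]add0e; apply: leeD => //; apply: le_lambda_outer => t [].
Qed.

Lemma lambda_measurable_hull B : exists H, [/\ M H, B `<=` H & lr H = lr B].
Proof.
have cover n : exists C, [/\ M C, B `<=` C &
    lam C <= lam B + (((2 : R)^-1) ^+ n)%:E].
  have [s [Bs Hs]] := lambda_outer_adherent B (halfpow_gt0 R n).
  exists (\bigcup_i cylinder (s i)); split => //.
    by apply: caratheodory_measurable_bigcup => i; exact: cylinder_measurable.
  apply: le_trans Hs; apply: le_trans (outer_measure_sigma_subadditive _ _) _.
  apply: lee_nneseries => [*|i _]; first exact: outer_measure_ge0.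
  exact: lambda_outer_le_cylinder.
have [C HC] := choice cover.
have BC : B `<=` \bigcap_n C n by move=> t Bt n _; have [_ + _] := HC n; apply.
exists (\bigcap_n C n); split => //.
  by apply: (@bigcapT_measurable _ U) => n; have [] := HC n.
apply/eqP; rewrite eq_le (le_lambda_real BC) andbT -lee_fin -!lambda_outerE.
apply: lee_add_halfpow => n; have [_ _ CB] := HC n.
by apply: le_trans CB; apply: le_lambda_outer => t; apply.
Qed.

Lemma lambda_real_cvg (F : nat -> set cantor_space) (A : set cantor_space) :
  lam \o F @ \oo --> lam A -> lr \o F @ \oo --> lr A.
Proof.
rewrite lambda_outerE (_ : lam \o F = fun n => (lr (F n))%:E) //.
  by move=> /fine_cvgP [].
by apply: funext => n /=; rewrite lambda_outerE.
Qed.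

(* Replace each [B n] by a measurable hull, then apply continuity from below of
   the measure on the Caratheodory sigma-algebra. *)
Lemma lambda_real_nondecreasing_bigcup (B : nat -> set cantor_space) :
  (forall n, B n `<=` B n.+1) ->
  forall e, (0 < e)%R -> exists n, (lr (\bigcup_n B n) <= lr (B n) + e)%R.
Proof.
move=> /(homo_leq (@subset_refl _) (fun _ _ _ => @subset_trans _ _ _ _)) Bnd e e0.
have [H HH] := choice (fun n => lambda_measurable_hull (B n)).
pose G k := \bigcap_(j in [set j | (k <= j)%N]) H j.
have BG k : B k `<=` G k.
  by move=> t Bt j /= kj; have [_ + _] := HH j; apply; exact: Bnd kj _ Bt.
have MG k : M (G k).
  apply: (@bigcap_measurable _ U) => [|j _]; first by exists k => /=.
  by have [] := HH j.
have lrG k : lr (G k) = lr (B k).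
  apply/eqP; rewrite eq_le (le_lambda_real (BG k)) andbT.
  by have [_ _ <-] := HH k; apply: le_lambda_real => t /(_ k (leqnn k)).
have Gnd : nondecreasing_seq G.
  apply/nondecreasing_seqP => n; rewrite subsetEset => t Gt j /= nj.
  by apply: Gt; exact: ltnW.
have := @nondecreasing_cvg_mu _ U R mu G MG
  (caratheodory_measurable_bigcup MG) Gnd.
move=> /lambda_real_cvg /cvgrPdist_le /(_ e e0) [n _ /(_ n (leqnn n))] /=.
rewrite ler_norml => /andP [_ Gn]; exists n; rewrite -lrG.
apply: le_trans (le_lambda_real (subset_bigcup (fun k _ => BG k))) _; lra.
Qed.

Lemma lambda_real_nonincreasing_bigcap (K : nat -> set cantor_space) (c : R) :
  (forall n, M (K n)) -> (forall n, K n.+1 `<=` K n) ->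
  (forall n, c <= lr (K n))%R -> (c <= lr (\bigcap_n K n))%R.
Proof.
move=> MK Kni Kc.
have Knd : nonincreasing_seq K.
  by apply/nonincreasing_seqP => n; rewrite subsetEset.
have := @nonincreasing_cvg_mu _ U R mu K
  (ltac:(by rewrite /= lambda_outerE ltry)) MK (@bigcapT_measurable _ U _ MK) Knd.
move=> /lambda_real_cvg /cvgrPdist_lt cvgK; apply/ler_addgt0Pr => e e0.
have [n _ /(_ n (leqnn n))] := cvgK e e0.
rewrite /= ltr_norml => /andP [Kn _]; have := Kc n; lra.
Qed.

Lemma lambda_measurable_finitary (S : set cantor_space) L :
  (forall t t', (forall i, (i < L)%N -> t i = t' i) -> S t -> S t') -> M S.
Proof.
move=> SL.
have -> : S = \bigcup_(s in [set s | cylinder s `<=` S]) cylinder s.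
  apply/seteqP; split => [t St|t [s sS /sS] //].
  exists (mkseq t L); last by move=> i; rewrite size_mkseq => iL; rewrite nth_mkseq.
  move=> t' ct'; apply: SL St => i iL.
  by rewrite (ct' i) ?size_mkseq // nth_mkseq.
rewrite bigcup_mkcond; apply: (@countable_bigcupT_measurable _ U) => [|s].
  exact: countableP.
by case: ifP => _; [exact: cylinder_measurable|exact: (@measurable0 _ U)].
Qed.

Lemma lambda_measurable_inner_approx P :
  (forall e, (0 < e)%R -> exists K, [/\ M K, K `<=` P & (lr P - e <= lr K)%R]) ->
  M P.
Proof.
move=> inner; have [K HK] := choice (fun n => inner _ (halfpow_gt0 R n)).
pose G := \bigcup_n K n.
have MG : M G by apply: caratheodory_measurable_bigcup => n; have [] := HK n.
have GP : G `<=` P by move=> t [n _]; have [_ + _] := HK n; apply.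
have lrPG : (lr P <= lr G)%R.
  rewrite -lee_fin -!lambda_outerE; apply: lee_add_halfpow => n.
  have [_ _ Kn] := HK n; rewrite !lambda_outerE -EFinD lee_fin.
  have : (lr (K n) <= lr G)%R by apply: le_lambda_real => t Kt; exists n.
  lra.
have [H [MH PH lrH]] := lambda_measurable_hull P.
have PG0 : lr (P `&` ~` G) = 0%R.
  apply/eqP; rewrite eq_le lambda_real_ge0 andbT.
  have := lambda_real_split H MG; rewrite (setIidr (subset_trans GP PH)).
  have : (lr (P `&` ~` G) <= lr (H `&` ~` G))%R.
    by apply: le_lambda_real => t [Pt nG]; split => //; exact: PH.
  lra.
rewrite -(setDUK GP) setDE; apply: caratheodory_measurable_setU => //.
exact: lambda_measurable_null.
Qed.

End LambdaMeasurable.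

(** * Zero-one law for translation-invariant sets *)

Definition cantor_add (t0 t : cantor_space) : cantor_space := fun i => t i (+) t0 i.

Definition word_add (t0 : cantor_space) (s : seq bool) : seq bool :=
  mkseq (fun i => nth false s i (+) t0 i) (size s).

Definition cantor_delta (j : nat) : cantor_space := fun i => i == j.

Lemma cantor_addK t0 : involutive (cantor_add t0).
Proof. by move=> t; apply: funext => i; rewrite /cantor_add addbK. Qed.

Lemma cantor_add_preimage_cylinder t0 s :
  cantor_add t0 @^-1` cylinder s = cylinder (word_add t0 s).
Proof.
apply/seteqP; split => t /= ts i; rewrite /word_add ?size_mkseq => iS.
  by rewrite nth_mkseq // -(ts i iS) /cantor_add addbK.
by have := ts i; rewrite size_mkseq nth_mkseq // /cantor_add => /(_ iS) ->; rewrite addbK.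
Qed.

Lemma cantor_add_delta_cylinder_rcons u b :
  cantor_add (cantor_delta (size u)) @^-1` cylinder (rcons u b) =
  cylinder (rcons u (~~ b)).
Proof.
rewrite !cylinder_rcons /cantor_add /cantor_delta; apply/seteqP.
split => t /= [ut tu]; split.
- by move=> i iu; rewrite -(ut i iu) (ltn_eqF iu) addbF.
- by rewrite -tu eqxx addbT negbK.
- by move=> i iu; rewrite (ut i iu) (ltn_eqF iu) addbF.
- by rewrite tu eqxx addbT negbK.
Qed.

Section ZeroOne.
Variable R : realType.
Local Open Scope ereal_scope.
Local Notation lam := (@lambda_outer R).
Local Notation lr := (@lambda_real R).
Local Notation w := (@cylinder_weight R).

Lemma lambda_outer_cantor_add t0 B : lam (cantor_add t0 @^-1` B) = lam B.
Proof.
suff le_add B' : lam (cantor_add t0 @^-1` B') <= lam B'.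
  apply/eqP; rewrite eq_le le_add /=.
  have {1}-> : B = cantor_add t0 @^-1` (cantor_add t0 @^-1` B).
    by apply/seteqP; split => t; rewrite /= cantor_addK.
  exact: le_add.
apply: le_ereal_inf_tmp => _ [s [Bs ->]].
have cover : cantor_add t0 @^-1` B' `<=` \bigcup_i cylinder (word_add t0 (s i)).
  by move=> t /Bs [i _ st]; exists i => //; rewrite -cantor_add_preimage_cylinder.
apply: le_trans (lambda_outer_le_cover R cover) _.
apply: lee_nneseries => [*|i _]; first exact/cylinder_weight_ge0.
by rewrite /cylinder_weight /word_add size_mkseq.
Qed.

Section FlipInvariant.
Variable H : set cantor_space.
Hypothesis H_flip : forall j, cantor_add (cantor_delta j) @^-1` H = H.

(* The two halves of [cylinder u] are exchanged by flipping coordinate [size u]. *)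
Lemma lambda_real_setI_cylinder s : lr (H `&` cylinder s) = (w s * lr H)%R.
Proof.
elim/last_ind: s => [|u b IH]; first by rewrite cylinder_nil setIT /w expr0 mul1r.
have sub : cylinder (rcons u b) `<=` cylinder u.
  by rewrite cylinder_rcons; exact: subIsetl.
have other_half : H `&` cylinder u `&` ~` cylinder (rcons u b) =
    H `&` cylinder (rcons u (~~ b)).
  rewrite !cylinder_rcons -!setIA; congr (_ `&` _); apply/seteqP; split => t /=.
    by move=> [ut /not_andP [//|tb]]; split => //; move: tb; case: (t (size u)); case: (b).
  by move=> [ut tb]; split => // -[_]; rewrite tb; case: (b).
have halves := lambda_real_split (H `&` cylinder u) (cylinder_measurable R (rcons u b)).
rewrite -setIA (setIidr sub) other_half in halves.
have swap : lr (H `&` cylinder (rcons u (~~ b))) = lr (H `&` cylinder (rcons u b)).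
  have := lambda_outer_cantor_add (cantor_delta (size u)) (H `&` cylinder (rcons u b)).
  by rewrite preimage_setI H_flip cantor_add_delta_cylinder_rcons /lambda_real => ->.
have w_rcons : w (rcons u b) = (2^-1 * w u)%R by rewrite /w size_rcons exprS.
rewrite w_rcons; move: IH halves; rewrite swap; lra.
Qed.

Lemma lambda_outer_flip_invariant01 : lam H = 0 \/ lam H = 1.
Proof.
rewrite lambda_outerE; set a := lr H.
have a0 : (0 <= a)%R := lambda_real_ge0 R H.
have a1 : (a <= 1)%R := lambda_real_le1 R H.
suff aa : (a <= a * a)%R.
  have [->|an0] := eqVneq a 0%R; [by left|right].
  by congr (_%:E); nra.
apply/ler_addgt0Pr => e e0.
have [s [Hs Hsum]] := lambda_outer_adherent H e0.
have : lam H <= (a * (a + e))%:E.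
  apply: le_trans (_ : lam H <= lam (\bigcup_i (H `&` cylinder (s i)))) _.
    by apply: le_lambda_outer => t Ht; have [i _ ci] := Hs t Ht; exists i.
  apply: le_trans (outer_measure_sigma_subadditive lam _) _.
  have -> : \sum_(0 <= i <oo) lam (H `&` cylinder (s i)) =
      \sum_(0 <= i <oo) (a%:E * (w (s i))%:E).
    by apply: eq_eseriesr => i _; rewrite lambda_outerE lambda_real_setI_cylinder mulrC.
  rewrite nneseriesZl => [|*]; last exact/cylinder_weight_ge0.
  rewrite EFinM; apply: lee_wpmul2l; first by rewrite lee_fin.
  by rewrite EFinD /a -lambda_outerE.
rewrite lambda_outerE -/a lee_fin; nra.
Qed.

End FlipInvariant.

Lemma lambda_full_meets_translate (A : set cantor_space) t0 :
  lambda_measurable R A -> lam A = 1 ->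
  exists t, A t /\ A (cantor_add t0 t).
Proof.
move=> MA A1; apply: contrapT => /forallNP noT.
have lrA : lr A = 1%R by apply: EFin_inj; rewrite -lambda_outerE A1.
have lrCA : lr (~` A) = 0%R.
  by have := lambda_real_split setT MA; rewrite !setTI lambda_real_setT lrA; lra.
have : (lr (cantor_add t0 @^-1` A) <= lr (~` A))%R.
  by apply: le_lambda_real => t /= At0 At; apply: (noT t).
by rewrite lrCA /lambda_real lambda_outer_cantor_add -/(lr A) lrA; lra.
Qed.

End ZeroOne.

(** * Measurability of analytic preimages *)

Lemma dependent_choice_seq (P : seq nat -> nat -> Prop) :
  (forall p, exists v, P p v) -> exists k : nat -> nat, forall j, P (mkseq k j) (k j).
Proof.
move=> /choice [g Pg].
pose step p := rcons p (g p).
pose k i := nth 0%N (iter i.+1 step [::]) i.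
have size_iter j : size (iter j step [::]) = j.
  by elim: j => //= j IH; rewrite size_rcons IH.
have kE j : k j = g (iter j step [::]).
  by rewrite /k iterS /step nth_rcons size_iter ltnn eqxx.
have iterE j : iter j step [::] = mkseq k j.
  by elim: j => // j IH; rewrite iterS /step mkseqS kE IH.
by exists k => j; rewrite kE -iterE.
Qed.

Lemma continuous_baire_coord_local (f : baire_space -> cantor_space) :
  continuous f -> forall (σ : baire_space) n, exists L, forall σ' : baire_space,
    (forall i, (i < L)%N -> σ' i = σ i) -> f σ' n = f σ n.
Proof.
move=> cf σ n.
pose prefix L := [set g : baire_space | forall i, (i < L)%N -> g i = σ i].
have prefix_filter : Filter (filter_from setT prefix).
  apply: filter_from_filter; first by exists 0%N.
  move=> i j _ _; exists (maxn i j) => //; rewrite subsetI.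
  by split => g g_ij k kl; apply: g_ij; rewrite (leq_trans kl) // ?leq_maxl ?leq_maxr.
have prefix_cvg : filter_from setT prefix --> σ.
  apply/(@pointwise_cvgP nat nat _ σ prefix_filter) => i.
  by move=> V /nbhs_singleton Vi; exists i.+1 => // g g_i /=; rewrite g_i.
have coord_nbhs : nbhs (f σ) [set u : cantor_space | u n = f σ n].
  apply: open_nbhs_nbhs; split => //.
  have -> : [set u : cantor_space | u n = f σ n] = proj n @^-1` [set f σ n] by [].
  by apply: open_comp; [move=> t _; exact: proj_continuous|exact: discrete_open].
have [L _ HL] := cvg_trans (cvg_app f prefix_cvg) (cf σ) coord_nbhs.
by exists L => σ' σ'L; exact: HL.
Qed.

Section Konig.
Variables (S : nat -> baire_space) (k : nat -> nat).
Hypothesis S_bounded : forall j i, (i < j)%N -> (S j i <= k i)%N.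

Definition frequent_prefix (p : seq nat) := forall J, exists j,
  (J <= j)%N /\ forall i, (i < size p)%N -> S j i = nth 0%N p i.

(* Pigeonhole: only the [k (size p) + 1] values [v <= k (size p)] can follow [p]. *)
Lemma frequent_prefix_rcons p :
  frequent_prefix p -> exists v, frequent_prefix (rcons p v).
Proof.
move=> Fp; apply: contrapT => /forallNP noF.
have : forall v, exists J, forall j, (J <= j)%N ->
    ~ (forall i, (i < (size p).+1)%N -> S j i = nth 0%N (rcons p v) i).
  move=> v; apply: contrapT => hv; apply: (noF v) => J; apply: contrapT => nJ.
  by apply: hv; exists J => j Jj Sj; apply: nJ; exists j; rewrite size_rcons.
move=> /choice [Jf hJf].
set n := size p.
have [j [Jj Sj]] := Fp (maxn n.+1 (\max_(v < (k n).+1) Jf v)).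
have nj : (n < j)%N := leq_trans (leq_maxl _ _) Jj.
have Sjn : (S j n < (k n).+1)%N by rewrite ltnS; exact: S_bounded.
apply: (hJf (S j n) j).
  apply: leq_trans _ Jj; apply: leq_trans (leq_maxr _ _).
  exact: (leq_bigmax (Ordinal Sjn)).
move=> i; rewrite ltnS leq_eqVlt nth_rcons => /orP [/eqP ->|il].
  by rewrite ltnn eqxx.
by rewrite il; exact: Sj.
Qed.

Lemma frequent_branch :
  exists σ : baire_space, forall L, frequent_prefix (mkseq σ L).
Proof.
have extend p : exists v, frequent_prefix p -> frequent_prefix (rcons p v).
  case: (pselect (frequent_prefix p)) => [/frequent_prefix_rcons [v Fv]|nFp].
    by exists v.
  by exists 0%N => /nFp.
have [σ Fσ] := dependent_choice_seq extend.
exists σ; elim => [|L IH]; last by rewrite mkseqS; exact: Fσ.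
by move=> J; exists J; split => // i; rewrite ltn0.
Qed.

End Konig.

Definition finitely_determined (psi : cantor_space -> cantor_space) :=
  forall j, exists L, forall t t' : cantor_space,
    (forall i, (i < L)%N -> t i = t' i) -> forall n, (n < j)%N -> psi t n = psi t' n.

Section Lusin.
Variable R : realType.
Variables (psi : cantor_space -> cantor_space) (f : baire_space -> cantor_space).
Hypothesis psi_fin : finitely_determined psi.
Hypothesis f_cont : continuous f.
Local Notation M := (lambda_measurable R).
Local Notation lr := (@lambda_real R).

Definition bounded_preimage (b : seq nat) := [set t : cantor_space |
  exists σ : baire_space,
    (forall i, (i < size b)%N -> (σ i <= nth 0%N b i)%N) /\ psi t = f σ].

Definition approx_preimage (k : nat -> nat) (j : nat) := [set t : cantor_space |
  exists σ : baire_space,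
    (forall i, (i < j)%N -> (σ i <= k i)%N) /\ forall n, (n < j)%N -> psi t n = f σ n].

Lemma bounded_preimage_nil : bounded_preimage [::] = psi @^-1` range f.
Proof.
apply/seteqP; split => t /= [σ]; first by move=> [_ ψσ]; exists σ.
by move=> _ fσ; exists σ.
Qed.

Lemma bounded_preimage_rcons b :
  bounded_preimage b = \bigcup_m bounded_preimage (rcons b m).
Proof.
apply/seteqP; split => t.
  move=> [σ [σb e]]; exists (σ (size b)) => //; exists σ; split => // i.
  rewrite size_rcons ltnS leq_eqVlt nth_rcons => /orP [/eqP ->|il].
    by rewrite ltnn eqxx.
  by rewrite il; exact: σb.
move=> [m _ [σ [σb e]]]; exists σ; split => // i il.
by have := σb i; rewrite size_rcons nth_rcons il; apply; exact: ltnW.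
Qed.

Lemma bounded_preimage_rcons_mono b m :
  bounded_preimage (rcons b m) `<=` bounded_preimage (rcons b m.+1).
Proof.
move=> t [σ [σb e]]; exists σ; split => // i; have := σb i.
rewrite !size_rcons !nth_rcons; case: ifP => // _; case: ifP => // _ h /h.
by move=> /leq_trans; apply.
Qed.

(* Choose the bounds one at a time, losing at most [e 2^-(j+1)] at step [j]. *)
Lemma bounded_preimage_large (e : R) : (0 < e)%R -> exists k : nat -> nat,
  forall j, (lr (psi @^-1` range f) - e <= lr (bounded_preimage (mkseq k j)))%R.
Proof.
move=> e0; pose eps j := (e * ((2 : R)^-1) ^+ j)%R.
have eps_gt0 j : (0 < eps j)%R by rewrite mulr_gt0 // halfpow_gt0.
have step b : exists m,
    (lr (bounded_preimage b) <= lr (bounded_preimage (rcons b m)) + eps (size b).+1)%R.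
  rewrite bounded_preimage_rcons; apply: lambda_real_nondecreasing_bigcup => //.
  exact: bounded_preimage_rcons_mono.
have [k hk] := dependent_choice_seq step.
exists k.
suff inv : forall j, (lr (psi @^-1` range f) <=
    lr (bounded_preimage (mkseq k j)) + e - eps j)%R.
  by move=> j; have := inv j; have := eps_gt0 j; lra.
elim => [|j IH]; first by rewrite bounded_preimage_nil /eps expr0 mulr1; lra.
have := hk j; rewrite size_mkseq -mkseqS.
have -> : eps j.+1 = (eps j / 2)%R by rewrite /eps exprS mulrCA mulrC.
lra.
Qed.

Lemma bounded_preimage_sub_approx k j :
  bounded_preimage (mkseq k j) `<=` approx_preimage k j.
Proof.
move=> t [σ [σk ψσ]]; exists σ; split => [i ij|n _]; last by rewrite ψσ.
by have := σk i; rewrite size_mkseq nth_mkseq //; exact.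
Qed.

Lemma approx_preimage_measurable k j : M (approx_preimage k j).
Proof.
have [L HL] := psi_fin j.
apply: (@lambda_measurable_finitary R _ L) => t t' tt' [σ [σk ψσ]].
by exists σ; split => // n nj; rewrite -(HL t t' tt' n nj); exact: ψσ.
Qed.

Lemma approx_preimage_decr k j : approx_preimage k j.+1 `<=` approx_preimage k j.
Proof.
move=> t [σ [σk ψσ]]; exists σ.
by split => [i ij|n nj]; [apply: σk|apply: ψσ]; exact: ltnW.
Qed.

(* Konig's lemma: a limit point of the witnesses [σ_j] is a witness. *)
Lemma bigcap_approx_preimage k :
  \bigcap_j approx_preimage k j `<=` psi @^-1` range f.
Proof.
move=> t tK; have [S hS] := choice (fun j => tK j I).
have [σ Fσ] := @frequent_branch S k (fun j i ij => (hS j).1 i ij).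
exists σ => //; apply: funext => n.
have [L HL] := continuous_baire_coord_local f_cont σ n.
have [j [nj Sσ]] := Fσ L n.+1; rewrite size_mkseq in Sσ.
rewrite -(HL (S j)); first by rewrite (hS j).2.
by move=> i iL; rewrite Sσ // nth_mkseq.
Qed.

Lemma lambda_measurable_preimage_range : M (psi @^-1` range f).
Proof.
apply: lambda_measurable_inner_approx => e e0.
have [k hk] := bounded_preimage_large e0.
exists (\bigcap_j approx_preimage k j); split.
- by apply: (@bigcapT_measurable _ (caratheodory_type (@lambda_outer R))) => j;
    exact: approx_preimage_measurable.
- exact: bigcap_approx_preimage.
apply: lambda_real_nonincreasing_bigcap => [j|j|j].
- exact: approx_preimage_measurable.
- exact: approx_preimage_decr.
- exact: le_trans (hk j) (le_lambda_real R (@bounded_preimage_sub_approx k j)).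
Qed.

End Lusin.

Lemma lambda_measurable_preimage_analytic (R : realType)
    (psi : cantor_space -> cantor_space) (S : set cantor_space) :
  finitely_determined psi -> analytic S -> lambda_measurable R (psi @^-1` S).
Proof.
move=> psi_fin [->|[f [f_cont ->]]].
  by rewrite preimage_set0; exact: (@measurable0 _ (caratheodory_type (@lambda_outer R))).
exact: lambda_measurable_preimage_range.
Qed.

Lemma lambda_measurable_preimage_coanalytic (R : realType)
    (psi : cantor_space -> cantor_space) (S : set cantor_space) :
  finitely_determined psi -> coanalytic S -> lambda_measurable R (psi @^-1` S).
Proof.
move=> psi_fin /(lambda_measurable_preimage_analytic R psi_fin).
by rewrite preimage_setC => /caratheodory_measurable_setC; rewrite setCK.
Qed.

(** * Ideal convergence *)

Section IdealConvergence.
Variable R : realType.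
Variable X : completeNormedModType R.
Variable I : set (set nat).
Hypothesis hI : is_ideal I.
Local Notation eps k := (((2 : R)^-1) ^+ k).

Lemma ideal_sub A B : B `<=` A -> I A -> I B.
Proof. by case: hI => _ Isub _ _; exact: Isub. Qed.

Lemma ideal_setU A B : I A -> I B -> I (A `|` B).
Proof. by case: hI => IU _ _ _; exact: IU. Qed.

Lemma ideal_compl_nonempty A : I A -> exists n, ~ A n.
Proof.
move=> IA; case: hI => _ _ IT _; apply/existsNP => An; apply: IT.
by rewrite (_ : setT = A) //; apply/seteqP; split => // n _; exact: An.
Qed.

Lemma ideal_lt n : I [set i | (i < n)%N].
Proof. by case: hI => _ _ _; apply; exact: finite_II. Qed.

Lemma I_converges_cauchy (y : nat -> X) l : I_converges_to I y l ->
  forall k, exists m, I [set n | eps k < `|y n - y m|].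
Proof.
move=> yl k; have e2 : 0 < eps k / 2 by rewrite divr_gt0 ?halfpow_gt0.
have [m /negP] := ideal_compl_nonempty (yl _ e2); rewrite -leNgt => ylm.
exists m; apply: ideal_sub (yl _ e2) => n /= yn; rewrite ltNge; apply/negP => yln.
have := ler_distD l (y n) (y m); rewrite (distrC l); move: yn yln ylm; lra.
Qed.

(* A subsequence [y (m k)] is Cauchy; its limit is the [I]-limit of [y]. *)
Lemma I_cauchy_converges (y : nat -> X) :
  (forall k, exists m, I [set n | eps k < `|y n - y m|]) ->
  exists l, I_converges_to I y l.
Proof.
move=> /choice [m ym]; pose z k := y (m k).
have near_z k n : ~ [set n | eps k < `|y n - y (m k)|] n -> `|y n - z k| <= eps k.
  by move=> /= /negP; rewrite -leNgt.
have z_cauchy j k : `|z j - z k| <= eps j + eps k.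
  have [n /not_orP [/near_z nj /near_z nk]] :=
    ideal_compl_nonempty (ideal_setU (ym j) (ym k)).
  have := ler_distD (y n) (z j) (z k); rewrite (distrC (z j) (y n)).
  move: nj nk; lra.
have cz : cvg (z @ \oo).
  apply: cauchy_cvg; apply: cauchy_exP => e e0.
  have [k hk] := halfpow_lt (divr_gt0 e0 (ltr0Sn _ 1)).
  exists (z k); exists k => // j /= kj; rewrite -ball_normE /=.
  have := z_cauchy k j; have := halfpow_le R kj; move: hk; lra.
exists (lim (z @ \oo)) => e e0.
have [k hk] := halfpow_lt (divr_gt0 e0 (ltr0Sn _ 3)).
move/cvgrPdist_lt : cz => /(_ _ (halfpow_gt0 R k)) [N _ HN].
have lz : `|lim (z @ \oo) - z (maxn N k)| < eps k by apply: HN; exact: leq_maxl.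
apply: ideal_sub (ym k) => n /= yn; rewrite -/(z k) ltNge; apply/negP => ynk.
have := z_cauchy k (maxn N k); have := halfpow_le R (leq_maxr N k).
have := ler_distD (z k) (y n) (lim (z @ \oo)).
have := ler_distD (z (maxn N k)) (z k) (lim (z @ \oo)).
rewrite (distrC (z (maxn N k))); move: lz ynk yn hk; lra.
Qed.

End IdealConvergence.

Section WeightedSeries.
Variable R : realType.
Variable X : completeNormedModType R.
Variable I : set (set nat).
Hypothesis hI : is_ideal I.

Lemma partial_sumsS (y : nat -> X) n :
  partial_sums y n.+1 = partial_sums y n + y n.+1.
Proof. by rewrite /partial_sums big_ord_recr. Qed.

Lemma partial_sums_change1 (y y' : nat -> X) j :
  (forall i, i != j -> y' i = y i) -> forall n,
  partial_sums y' n = partial_sums y n + (if (j <= n)%N then y' j - y j else 0).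
Proof.
move=> yy'; elim => [|n IH].
  rewrite /partial_sums !big_ord1 leqn0; case: eqP => [->|/eqP j0].
    by rewrite addrC subrK.
  by rewrite addr0 yy' // eq_sym.
rewrite !partial_sumsS IH.
case: (ltngtP j n.+1) => [jn|jn|->].
- by rewrite -ltnS jn (yy' n.+1) ?gtn_eqF // addrAC.
- by rewrite leqNgt (ltnW jn) /= !addr0 (yy' n.+1) // ltn_eqF.
- by rewrite ltnn addr0 -addrA [y _ + _]addrC subrK.
Qed.

Lemma I_converges_to_shift (y y' : nat -> X) c j l :
  (forall n, (j <= n)%N -> y' n = y n + c) ->
  I_converges_to I y l -> I_converges_to I y' (l + c).
Proof.
move=> yy' yl e e0.
apply: (ideal_sub hI) (ideal_setU hI (yl e e0) (ideal_lt hI j)) => n /= yn.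
case: (ltnP n j) => [nj|jn]; [by right|left].
by move: yn; rewrite yy' // opprD addrACA subrr addr0.
Qed.

Lemma I_converges_toD (y1 y2 : nat -> X) l1 l2 :
  I_converges_to I y1 l1 -> I_converges_to I y2 l2 ->
  I_converges_to I (fun n => y1 n + y2 n) (l1 + l2).
Proof.
move=> yl1 yl2 e e0; have e2 : 0 < e / 2 by rewrite divr_gt0.
apply: (ideal_sub hI) (ideal_setU hI (yl1 _ e2) (yl2 _ e2)) => n /=.
rewrite opprD addrACA => yn; apply: contrapT => /not_orP [] /= /negP.
rewrite -leNgt => y1n /negP; rewrite -leNgt => y2n.
by have := ler_normD (y1 n - l1) (y2 n - l2); move: yn y1n y2n; lra.
Qed.

Definition convergence_set (x : nat -> X) := [set t : cantor_space |
  I_convergent_series I (fun n => (t n)%:R *: x n)].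

Lemma convergence_set_flip x j :
  cantor_add (cantor_delta j) @^-1` convergence_set x = convergence_set x.
Proof.
suff flip_conv : forall t t' : cantor_space, (forall i, i != j -> t' i = t i) ->
    convergence_set x t -> convergence_set x t'.
  apply/seteqP; split => t /=; apply: flip_conv => i ij;
    by rewrite /cantor_add /cantor_delta (negbTE ij) addbF.
move=> t t' tt' [l tl]; exists (l + ((t' j)%:R *: x j - (t j)%:R *: x j)).
have tt'x i : i != j -> (t' i)%:R *: x i = (t i)%:R *: x i by move=> /tt' ->.
apply: (I_converges_to_shift (j := j)) tl => n jn.
by rewrite (partial_sums_change1 tt'x) jn.
Qed.

Lemma convergence_set_complement x t :
  convergence_set x t -> convergence_set x (cantor_add (fun=> true) t) ->
  I_convergent_series I x.
Proof.
move=> [l1 tl1] [l2 tl2]; exists (l1 + l2).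
have := I_converges_toD tl1 tl2; congr I_converges_to; apply: funext => n.
rewrite /partial_sums -big_split; apply: eq_bigr => i _.
by rewrite /= -scalerDl /cantor_add; case: (t i); rewrite /= ?add0r ?addr0 scale1r.
Qed.

Definition cauchy_code (x : nat -> X) (k m : nat) (t : cantor_space) : cantor_space :=
  fun n => ((2 : R)^-1) ^+ k <
    `|partial_sums (fun i => (t i)%:R *: x i) n - partial_sums (fun i => (t i)%:R *: x i) m|.

Lemma cauchy_code_finitely_determined x k m : finitely_determined (cauchy_code x k m).
Proof.
move=> j; exists (j + m.+1)%N => t t' tt' n nj.
have same_sums p : (p <= j + m)%N ->
    partial_sums (fun i => (t i)%:R *: x i) p = partial_sums (fun i => (t' i)%:R *: x i) p.
  move=> pjm; apply: eq_bigr => i _; rewrite tt' // addnS ltnS.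
  by rewrite -ltnS (leq_trans (ltn_ord i)).
have nle : (n <= j + m)%N by rewrite (leq_trans (ltnW nj)) ?leq_addr.
by rewrite /cauchy_code !same_sums ?leq_addl.
Qed.

Lemma convergence_setE x : convergence_set x =
  \bigcap_k \bigcup_m (cauchy_code x k m @^-1` ideal_code I).
Proof.
apply/seteqP; split => t.
  by move=> [l /(I_converges_cauchy hI) tl] k _; have [m tm] := tl k; exists m.
move=> tI; apply: (I_cauchy_converges hI) => k.
by have [m _ tm] := tI k Logic.I; exists m.
Qed.

Lemma convergence_set_measurable x :
  analytic (ideal_code I) \/ coanalytic (ideal_code I) ->
  lambda_measurable R (convergence_set x).
Proof.
move=> code; rewrite convergence_setE.
apply: (@bigcapT_measurable _ (caratheodory_type (@lambda_outer R))) => k.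
apply: caratheodory_measurable_bigcup => m.
have psi_fin := cauchy_code_finitely_determined x k m.
case: code => [/(lambda_measurable_preimage_analytic R psi_fin)|
               /(lambda_measurable_preimage_coanalytic R psi_fin)] //.
Qed.

End WeightedSeries.

Unset Implicit Arguments.

Theorem theorem4p1 (R : realType) (X : completeNormedModType R)
  (I : set (set nat)) (x : nat -> X) :
  is_ideal I ->
  analytic (ideal_code I) \/ coanalytic (ideal_code I) ->
  let A := [set t : cantor_space |
              I_convergent_series I (fun n => (t n)%:R *: x n)] in
  [/\ lambda_measurable R A,
      (lambda_outer R A = (0%R)%:E \/ lambda_outer R A = (1%R)%:E) &
      (~ I_convergent_series I x -> lambda_outer R A = (0%R)%:E)].
Proof.
move=> hI code A.
have MA : lambda_measurable R A := convergence_set_measurable hI x code.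
have A01 := lambda_outer_flip_invariant01 R (convergence_set_flip hI x).
split => // x_div; case: A01 => // A1.
have [t [At Att]] := lambda_full_meets_translate (fun=> true) MA A1.
by case: x_div; exact: convergence_set_complement At Att.
Qed.
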